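(* Let $(X,\|\cdot,\cdot\|)$ be a linear 2-normed space and let $E$ be a nonempty (sequentially) closed and bounded subset of $X$. Let $T:E\to E$ be a contraction. Then $T$ has a unique fixed point in $E$.
   Context: A linear 2-normed space is a real linear space $X$ of dimension greater than 1 with a function $\|\cdot,\cdot\|:X\times X\to\mathbb{R}$ such that: $\|x,y\|=0$ iff $x,y$ are linearly dependent; $\|x,y\|=\|y,x\|$; $\|\alpha x,y\|=|\alpha|\,\|x,y\|$; $\|x+y,z\|\le\|x,z\|+\|y,z\|$. A sequence $x_n\to x$ means $\|x_n-x,z\|\to0$ for every $z\in X$. $\overline{E}=\{x\in X:$ some sequence in $E$ converges to $x\}$, and $E$ is (sequentially) closed if $E=\overline{E}$. For $e\in E$, $E$ is $e$-bounded if there is $M>0$ with $\|x,e\|\le M$ for all $x\in E$; $E$ is bounded if it is $e$-bounded for every $e\in E$. $T:E\to E$ is a contraction if there exists $k\in(0,1)$ with $\|Tx-Ty,z\|\le k\|x-y,z\|$ for all $x,y\in E$ and all $z\in X$. *)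

From HB Require Import structures.
From mathcomp Require Import all_boot all_order all_algebra.
From mathcomp Require Import all_classical all_reals all_analysis.
Set Implicit Arguments. Unset Strict Implicit. Unset Printing Implicit Defensive.
Import Order.TTheory GRing.Theory Num.Theory.
Import numFieldNormedType.Exports.
Local Open Scope ring_scope.
Local Open Scope classical_set_scope.

Definition lin_dep (R : realType) (X : lmodType R) (x y : X) : Prop :=
  exists a b : R, (a != 0 \/ b != 0) /\ a *: x + b *: y = 0.

Definition is_2normed_space (R : realType) (X : lmodType R)
    (N : X -> X -> R) : Prop :=
  (exists x y : X, ~ lin_dep x y) /\
  (forall x y, N x y = 0 <-> lin_dep x y) /\
  (forall x y, N x y = N y x) /\
  (forall (a : R) x y, N (a *: x) y = `|a| * N x y) /\
  (forall x y z, N (x + y) z <= N x z + N y z).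

Definition conv2 (R : realType) (X : lmodType R) (N : X -> X -> R)
    (u : nat -> X) (x : X) : Prop :=
  forall z : X, (fun n => N (u n - x) z) @ \oo --> (0 : R).

Definition seq_closure (R : realType) (X : lmodType R) (N : X -> X -> R)
    (E : set X) : set X :=
  [set x | exists u : nat -> X, (forall n, E (u n)) /\ conv2 N u x].

Definition seq_closed (R : realType) (X : lmodType R) (N : X -> X -> R)
    (E : set X) : Prop := E = seq_closure N E.

Definition e_bounded (R : realType) (X : lmodType R) (N : X -> X -> R)
    (E : set X) (e : X) : Prop :=
  exists M : R, 0 < M /\ forall x, E x -> N x e <= M.

Definition bounded2 (R : realType) (X : lmodType R) (N : X -> X -> R)
    (E : set X) : Prop := forall e, E e -> e_bounded N E e.

Definition contraction2 (R : realType) (X : lmodType R) (N : X -> X -> R)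
    (E : set X) (T : X -> X) : Prop :=
  exists k : R, 0 < k /\ k < 1 /\
    forall x y, E x -> E y -> forall z, N (T x - T y) z <= k * N (x - y) z.

(* The differences d_n = T^(n+1) x0 - T^n x0 of a Picard orbit all lie on the
   line through d_0: contraction gives ||d_(n+1), d_0|| <= k ||d_n, d_0|| and
   ||d_0, d_0|| = 0.  Writing d_n = c_n d_0, testing the contraction against a
   z with ||d_0, z|| > 0 gives |c_n| <= k^n, so the orbit is x0 + t_n d_0 for a
   convergent real sequence t_n and converges in the 2-norm.  Its limit lies in
   the closed set E and is fixed by T, because limits are unique once X has two
   independent vectors. *)
From HB Require Import structures.
From mathcomp Require Import all_boot all_order all_algebra.
From mathcomp Require Import all_classical all_reals all_analysis.
From mathcomp Require Import lra.
Import Order.TTheory GRing.Theory Num.Theory.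
Import numFieldNormedType.Exports.
Set Implicit Arguments. Unset Strict Implicit. Unset Printing Implicit Defensive.
Local Open Scope ring_scope.
Local Open Scope classical_set_scope.

Section LinearDependence.
Variables (R : realType) (X : lmodType R).

Lemma lin_dep_line (d u : X) : u != 0 -> lin_dep d u -> exists c, d = c *: u.
Proof.
move=> u_neq0 [a [b [ab_neq0 abE]]].
have a_neq0 : a != 0.
  apply/negP => /eqP a0; move: abE; rewrite a0 scale0r add0r => /eqP.
  rewrite scaler_eq0 (negbTE u_neq0) orbF.
  by case: ab_neq0 => [|/negbTE->]; rewrite ?a0 ?eqxx.
exists (- (b / a)); apply: (scalerI a_neq0).
rewrite scalerA mulrN mulrCA divff // mulr1 scaleNr.
by apply/eqP; rewrite -subr_eq0 opprK abE.
Qed.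

Lemma lin_dep_scale (u : X) (a b : R) : lin_dep (a *: u) (b *: u).
Proof.
have [->|a_neq0] := eqVneq a 0.
  by exists 1, 0; split; [left; exact: oner_neq0 | rewrite !scale0r scaler0 addr0].
exists b, (- a); split; first by right; rewrite oppr_eq0.
by rewrite !scalerA mulrC mulNr scaleNr subrr.
Qed.

End LinearDependence.

Section TwoNorm.
Variables (R : realType) (X : lmodType R) (N : X -> X -> R).
Hypothesis hN : is_2normed_space N.

Lemma twonorm_eq0 x y : N x y = 0 <-> lin_dep x y.
Proof. by case: hN => _ []. Qed.

Lemma twonormC x y : N x y = N y x.
Proof. by case: hN => _ [_ []]. Qed.

Lemma twonormZ a x y : N (a *: x) y = `|a| * N x y.
Proof. by case: hN => _ [_ [_ []]]. Qed.

Lemma twonorm_triangle x y z : N (x + y) z <= N x z + N y z.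
Proof. by case: hN => _ [_ [_ [_]]]. Qed.

Lemma twonorm0l z : N 0 z = 0.
Proof. by rewrite -(scale0r z) twonormZ normr0 mul0r. Qed.

Lemma twonormNl x z : N (- x) z = N x z.
Proof. by rewrite -scaleN1r twonormZ normrN normr1 mul1r. Qed.

Lemma twonorm_ge0 x z : 0 <= N x z.
Proof.
have := twonorm_triangle x (- x) z.
rewrite twonormNl subrr twonorm0l; lra.
Qed.

Lemma twonorm_le0 x z : N x z <= 0 -> N x z = 0.
Proof. by move=> le0; apply/eqP; rewrite eq_le le0 twonorm_ge0. Qed.

Lemma twonorm_self x : N x x = 0.
Proof. by apply/twonorm_eq0; rewrite -[x]scale1r; exact: lin_dep_scale. Qed.

(* A vector with vanishing 2-norm against everything would be collinear with
   both members of an independent pair. *)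
Lemma twonorm0_eq0 u : (forall z, N u z = 0) -> u = 0.
Proof.
case: hN => [[a [b ab_indep]] _] uz0; apply: contrapT => /eqP u_neq0.
have on_line v : exists c, v = c *: u.
  by apply: lin_dep_line => //; apply/twonorm_eq0; rewrite twonormC.
have [[ca caE] [cb cbE]] := (on_line a, on_line b).
by apply: ab_indep; rewrite caE cbE; exact: lin_dep_scale.
Qed.

Lemma twonorm_neq0 u : u != 0 -> exists z, 0 < N u z.
Proof.
move=> u_neq0; apply: contrapT => no_pos; move/eqP: u_neq0; apply.
apply: twonorm0_eq0 => z; apply: twonorm_le0.
by rewrite leNgt; apply/negP => pos; apply: no_pos; exists z.
Qed.

Lemma conv2_cst x : conv2 N (fun=> x) x.
Proof. by move=> z; rewrite subrr twonorm0l; exact: cvg_cst. Qed.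

Lemma conv2_line x d (t : R ^nat) (l : R) :
  t @ \oo --> l -> conv2 N (fun n => x + t n *: d) (x + l *: d).
Proof.
move=> tl z; have -> : (fun n => N (x + t n *: d - (x + l *: d)) z) =
    (fun n => `|t n - l| * N d z).
  by apply: funext => n; rewrite opprD addrACA subrr add0r -scalerBl twonormZ.
rewrite -(mul0r (N d z)); apply: cvgMr_tmp.
by apply/norm_cvg0P; rewrite -(subrr l); apply: cvgB => //; exact: cvg_cst.
Qed.

Lemma conv2_unique u x y : conv2 N u x -> conv2 N u y -> x = y.
Proof.
move=> ux uy; apply: subr0_eq; apply: twonorm0_eq0 => z.
have sum0 : (fun n => N (u n - x) z + N (u n - y) z) @ \oo --> (0 : R).
  by rewrite -[0 : R]addr0; apply: cvgD; [exact: ux | exact: uy].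
apply: twonorm_le0; rewrite -(cvg_lim _ sum0) //.
apply: limr_ge; first exact: cvgP sum0.
apply: nearW => n; rewrite [X in _ <= X]addrC.
have -> : x - y = (u n - y) + - (u n - x) by rewrite opprB [RHS]addrC addrA subrK.
by rewrite -(twonormNl (u n - x)); exact: twonorm_triangle.
Qed.

Section Contraction.
Variables (E : set X) (T : X -> X) (k : R).
Hypotheses (k_ge0 : 0 <= k) (k_lt1 : k < 1).
Hypothesis TE : forall x, E x -> E (T x).
Hypothesis T_contr : forall x y, E x -> E y -> forall z,
  N (T x - T y) z <= k * N (x - y) z.

Lemma contraction_fixed_unique p q : E p -> E q -> T p = p -> T q = q -> p = q.
Proof.
move=> Ep Eq Tp Tq; apply: subr0_eq; apply: twonorm0_eq0 => z; apply: twonorm_le0.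
have := T_contr Ep Eq z; rewrite Tp Tq -subr_ge0 -[X in _ - X]mul1r -mulrBl.
by rewrite nmulr_rge0 // subr_lt0.
Qed.

Lemma conv2_contraction u x : (forall n, E (u n)) -> E x ->
  conv2 N u x -> conv2 N (T \o u) (T x).
Proof.
move=> Eu Ex ux z.
apply: (squeeze_cvgr (f := fun=> 0) (h := fun n => k * N (u n - x) z)).
- by apply: nearW => n; rewrite twonorm_ge0 /=; exact: T_contr.
- exact: cvg_cst.
- by rewrite -(mulr0 k); apply: cvgMl_tmp; exact: ux.
Qed.

Variables (x0 : X).
Hypothesis Ex0 : E x0.

Lemma orbit_in n : E (iter n T x0).
Proof. by elim: n => [|n IH] //=; exact: TE. Qed.

Lemma orbit_step_dep n :
  lin_dep (iter n.+1 T x0 - iter n T x0) (T x0 - x0).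
Proof.
apply/twonorm_eq0; elim: n => [|n IH]; first exact: twonorm_self.
apply: twonorm_le0.
by have := T_contr (orbit_in n.+1) (orbit_in n) (T x0 - x0); rewrite IH mulr0.
Qed.

Lemma orbit_step_coef : T x0 != x0 -> exists c : R ^nat,
  (forall n, iter n.+1 T x0 - iter n T x0 = c n *: (T x0 - x0)) /\
  (forall n, `|c n| <= k ^+ n).
Proof.
rewrite -subr_eq0 => d0_neq0; set d0 := T x0 - x0 in d0_neq0 *.
have [z0 d0z0_gt0] := twonorm_neq0 d0_neq0.
suff /choice[c c_spec] : forall n, exists c : R,
    iter n.+1 T x0 - iter n T x0 = c *: d0 /\ `|c| <= k ^+ n.
  by exists c; split => n; case: (c_spec n).
elim=> [|n [c [cE c_le]]]; first by exists 1; rewrite scale1r expr0 normr1.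
have [c' c'E] := lin_dep_line d0_neq0 (orbit_step_dep n.+1).
exists c'; split => //.
have le_c' : `|c'| * N d0 z0 <= k * (`|c| * N d0 z0).
  by have := T_contr (orbit_in n.+1) (orbit_in n) z0; rewrite /= c'E cE !twonormZ.
rewrite -(ler_pM2r d0z0_gt0) exprS -mulrA (le_trans le_c') //.
by rewrite ler_wpM2l // ler_wpM2r // ltW.
Qed.

Lemma orbit_conv2 : exists xs, conv2 N (fun n => iter n T x0) xs.
Proof.
have [Tx0|Tx0_neq] := eqVneq (T x0) x0.
  by exists x0; under eq_fun do rewrite iter_fix //; exact: conv2_cst.
have [c [cE c_le]] := orbit_step_coef Tx0_neq.
have orbitE n : iter n T x0 = x0 + series c n *: (T x0 - x0).
  elim: n => [|n IH]; first by rewrite /series /= big_geq // scale0r addr0.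
  rewrite -(subrK (iter n T x0) (iter n.+1 T x0)) cE IH seriesSr scalerDl.
  by rewrite addrCA [c n *: _ + _]addrC.
have c_cvg : cvgn (series c).
  apply: normed_cvg; apply: (@series_le_cvg _ _ (geometric 1 k)).
  - by move=> n; exact: normr_ge0.
  - by move=> n; rewrite /geometric /= mul1r exprn_ge0.
  - by move=> n; rewrite /geometric /= mul1r.
  - by apply: is_cvg_geometric_series; rewrite ger0_norm.
exists (x0 + limn (series c) *: (T x0 - x0)).
under eq_fun do rewrite orbitE; exact: conv2_line.
Qed.

End Contraction.

Lemma contraction_fixed_point (E : set X) (T : X -> X) (k : R) :
  0 <= k -> k < 1 ->
  seq_closed N E -> E !=set0 -> (forall x, E x -> E (T x)) ->
  (forall x y, E x -> E y -> forall z, N (T x - T y) z <= k * N (x - y) z) ->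
  exists x, E x /\ T x = x.
Proof.
move=> k_ge0 k_lt1 E_closed [x0 Ex0] TE T_contr.
have [xs orbit_xs] := orbit_conv2 k_ge0 k_lt1 TE T_contr Ex0.
have Exs : E xs.
  by rewrite E_closed; exists (fun n => iter n T x0); split => //; exact: orbit_in.
exists xs; split => //; apply: (conv2_unique (u := fun n => iter n.+1 T x0)).
- exact: (conv2_contraction T_contr (orbit_in TE Ex0)).
- by move=> z; rewrite (cvg_shiftS (fun n => N (iter n T x0 - xs) z)); exact: orbit_xs.
Qed.

End TwoNorm.

Theorem lemma3p10 (R : realType) (X : lmodType R) (N : X -> X -> R)
  (hN : is_2normed_space N) (E : set X) (hne : E !=set0)
  (hcl : seq_closed N E) (hbd : bounded2 N E)
  (T : X -> X) (hTE : forall x, E x -> E (T x))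
  (hT : contraction2 N E T) :
  exists x, E x /\ T x = x /\ (forall y, E y -> T y = y -> y = x).
Proof.
have [k [k_gt0 [k_lt1 T_contr]]] := hT.
have [x [Ex Tx]] := contraction_fixed_point hN (ltW k_gt0) k_lt1 hcl hne hTE T_contr.
exists x; split=> //; split=> // y Ey Ty.
exact: (contraction_fixed_unique hN k_lt1 T_contr).
Qed.
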